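(* Let $Q$ be a quiver and $C$ a monomial admissible subcoalgebra of $kQ$. If there is a path $p\in C$ of positive length such that $p\beta\notin C$ for every arrow $\beta$ of $Q$ (or such that $\beta p\notin C$ for every arrow $\beta$), then $C$ is not semiprime. In particular, if there is an arrow $\alpha$ such that no arrow $\beta$ satisfies $\beta\alpha\in C$ (or no arrow $\beta$ satisfies $\alpha\beta\in C$), then $C$ is not semiprime. *)

From HB Require Import structures.
From mathcomp Require Import all_boot all_order all_algebra.
Set Implicit Arguments. Unset Strict Implicit. Unset Printing Implicit Defensive.
Import GRing.Theory.
Local Open Scope ring_scope.

(* A qpath is written left-to-right: (v, [:: a1; ...; an]) starts at v and
   satisfies s a1 = v, t a_i = s a_(i+1).  (v, [::]) is the trivial qpath e_v.
   The concatenation p q ("p followed by q") is defined when end p = start q. *)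
Section Quiver.
Variables (V A : Type) (s t : A -> V).

Definition qpath := (V * seq A)%type.

Fixpoint valid_from (v : V) (l : seq A) : Prop :=
  match l with
  | [::] => True
  | a :: l' => s a = v /\ valid_from (t a) l'
  end.

Definition valid_path (p : qpath) : Prop := valid_from p.1 p.2.

Fixpoint end_from (v : V) (l : seq A) : V :=
  match l with
  | [::] => v
  | a :: l' => end_from (t a) l'
  end.

Definition pstart (p : qpath) : V := p.1.
Definition pend (p : qpath) : V := end_from p.1 p.2.
Definition plength (p : qpath) : nat := size p.2.

Definition path_arrow (p : qpath) (b : A) : qpath := (p.1, rcons p.2 b).
Definition arrow_path (b : A) (p : qpath) : qpath := (s b, b :: p.2).
Definition arrow_as_path (a : A) : qpath := (s a, [:: a]).

(* A monomial subcoalgebra of kQ is the span of a set S of paths.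
   Comultiplication of kQ: Delta(p) = sum_{p = p1 p2} p1 (x) p2.
   The span of S is a subcoalgebra iff Delta(p) lies in C (x) C for each p in S,
   i.e. (the p1 (x) p2 being distinct basis tensors) iff for every splitting
   p = p1 p2 both p1 and p2 belong to S.  It is admissible when it contains
   kQ0 (+) kQ1, i.e. all trivial paths and all arrows. *)
Definition monomial_admissible_subcoalgebra (S : pred qpath) : Prop :=
  [/\ (forall p, S p -> valid_path p),
      (forall v l1 l2, S (v, l1 ++ l2) -> S (v, l1) /\ S (end_from v l1, l2)),
      (forall v, S (v, [::])) &
      (forall a, S (arrow_as_path a))].

Variable k : fieldType.

(* The dual algebra C^* of C = span S: linear forms on C, i.e. functions on the
   basis S, represented as functions qpath -> k vanishing off S, with the
   convolution product (f * g)(p) = sum_{p = p1 p2} f(p1) g(p2). *)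
Definition dual_elt (S : pred qpath) (f : qpath -> k) : Prop :=
  forall p, ~ S p -> f p = 0.

Definition conv (S : pred qpath) (f g : qpath -> k) (p : qpath) : k :=
  if S p then
    \sum_(i < (size p.2).+1)
       f (p.1, take i p.2) * g (end_from p.1 (take i p.2), drop i p.2)
  else 0.

Definition dual_add (f g : qpath -> k) : qpath -> k := fun p => f p + g p.

Definition dual_ideal (S : pred qpath) (I : (qpath -> k) -> Prop) : Prop :=
  [/\ (forall f, I f -> dual_elt S f),
      I (fun _ => 0),
      (forall f g, I f -> I g -> I (dual_add f g)),
      (forall f g, I f -> dual_elt S g -> I (conv S g f)) &
      (forall f g, I f -> dual_elt S g -> I (conv S f g))].

(* C is semiprime iff its dual algebra C^* is a semiprime algebra: C^* has no
   nonzero ideal I with I^2 = 0 (I^2 = 0 iff all products of elements of I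
   vanish). *)
Definition semiprime_coalgebra (S : pred qpath) : Prop :=
  forall I, dual_ideal S I ->
    (forall f g, I f -> I g -> forall p, conv S f g p = 0) ->
    forall f, I f -> forall p, f p = 0.

End Quiver.

From HB Require Import structures.
From mathcomp Require Import all_boot all_order all_algebra.
From Stdlib Require Import ClassicalEpsilon.
Set Implicit Arguments. Unset Strict Implicit. Unset Printing Implicit Defensive.
Import GRing.Theory.
Local Open Scope ring_scope.

(* Suppose p cannot be extended to the right inside C.  The functionals on C
   supported on paths ending with p form an ideal of C^*: a path of C whose
   initial segment ends with p cannot continue past p, so it ends with p
   itself.  For the same reason a product of two such functionals vanishes,
   and the ideal contains the dual basis element p^*, which is nonzero.
   Paths starting with p handle the left-hand case. *)

Section Paths.
Variables (V A : Type) (s t : A -> V).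

Lemma end_from_cat v l1 l2 :
  end_from t v (l1 ++ l2) = end_from t (end_from t v l1) l2.
Proof. by elim: l1 v => [|a l IHl] v //=. Qed.

Lemma valid_from_cat v l1 l2 :
  valid_from s t v (l1 ++ l2) -> valid_from s t (end_from t v l1) l2.
Proof. by elim: l1 v => [|a l IHl] v //= [_ /IHl]. Qed.

Lemma monomial_subpath (S : pred (qpath V A)) v l1 l2 l3 :
  monomial_admissible_subcoalgebra s t S ->
  S (v, l1 ++ l2 ++ l3) -> S (end_from t v l1, l2).
Proof. by case=> _ Ssplit _ _ /Ssplit [_ /Ssplit []]. Qed.

Definition ptake (i : nat) (q : qpath V A) : qpath V A := (q.1, take i q.2).
Definition pdrop (i : nat) (q : qpath V A) : qpath V A :=
  (end_from t q.1 (take i q.2), drop i q.2).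

Definition ends_with (p q : qpath V A) : Prop :=
  exists l, q.2 = l ++ p.2 /\ end_from t q.1 l = p.1.

Definition starts_with (p q : qpath V A) : Prop :=
  q.1 = p.1 /\ exists l, q.2 = p.2 ++ l.

Lemma ends_with_pdrop p q i : ends_with p (pdrop i q) -> ends_with p q.
Proof.
case=> l [El Ee]; exists (take i q.2 ++ l).
by rewrite -catA -El cat_take_drop end_from_cat.
Qed.

Lemma starts_with_ptake p q i : starts_with p (ptake i q) -> starts_with p q.
Proof.
case=> /= Eq [l El]; split=> //; exists (l ++ drop i q.2).
by rewrite catA -El cat_take_drop.
Qed.

End Paths.

Section DualAlgebra.
Variables (V A : Type) (t : A -> V) (k : fieldType) (S : pred (qpath V A)).

Lemma conv_eq0 (f g : qpath V A -> k) q :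
  (S q -> forall i, f (ptake i q) = 0 \/ g (pdrop t i q) = 0) ->
  conv t S f g q = 0.
Proof.
rewrite /conv; case: (S q) => // /(_ isT) fg0.
by apply: big1 => i _; case: (fg0 i) => ->; rewrite ?mul0r ?mulr0.
Qed.

Definition supported_on (P : qpath V A -> Prop) (f : qpath V A -> k) : Prop :=
  forall q, ~ P q -> f q = 0.

Definition path_indicator (p q : qpath V A) : k :=
  if excluded_middle_informative (q = p) then 1 else 0.

Section Supported.
Variable P : qpath V A -> Prop.
Let I := supported_on (fun q => S q /\ P q).

Lemma supported_dual_ideal :
  (forall q i, S q -> P (pdrop t i q) -> P q) ->
  (forall q i, S q -> P (ptake i q) -> P q) ->
  dual_ideal t S I.
Proof.
move=> P_pdrop P_ptake; split.
- by move=> f If q Sq; apply: If => -[].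
- by [].
- by move=> f g If Ig q nPq; rewrite /dual_add If // Ig // addr0.
- move=> f g If _ q nPq; apply: conv_eq0 => Sq i; right; apply: If => -[_].
  by move/(P_pdrop _ _ Sq) => Pq; apply: nPq.
- move=> f g If _ q nPq; apply: conv_eq0 => Sq i; left; apply: If => -[_].
  by move/(P_ptake _ _ Sq) => Pq; apply: nPq.
Qed.

Lemma supported_square_zero :
  (forall q i, S q -> P (ptake i q) -> P (pdrop t i q) -> False) ->
  forall f g, I f -> I g -> forall q, conv t S f g q = 0.
Proof.
move=> P_split f g If Ig q; apply: conv_eq0 => Sq i.
have [|f_neq0] := eqVneq (f (ptake i q)) 0; first by left.
right; apply: Ig => -[_ Pd]; move/eqP: f_neq0; apply; apply: If => -[_ Pt].
exact: P_split Sq Pt Pd.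
Qed.

Lemma not_semiprime_of_supported p :
  (forall q i, S q -> P (pdrop t i q) -> P q) ->
  (forall q i, S q -> P (ptake i q) -> P q) ->
  (forall q i, S q -> P (ptake i q) -> P (pdrop t i q) -> False) ->
  S p -> P p -> ~ semiprime_coalgebra t k S.
Proof.
move=> P_pdrop P_ptake P_split Sp Pp semiprime.
have Ip : I (path_indicator p).
  move=> q nPq; rewrite /path_indicator.
  by case: excluded_middle_informative => // Eq; case: nPq; rewrite Eq.
have := semiprime I (supported_dual_ideal P_pdrop P_ptake)
  (supported_square_zero P_split) _ Ip p.
rewrite /path_indicator; case: excluded_middle_informative => // _ /eqP.
by rewrite oner_eq0.
Qed.

End Supported.
End DualAlgebra.

Section NonExtendablePath.
Variables (V A : Type) (s t : A -> V) (k : fieldType).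
Variables (S : pred (qpath V A)) (p : qpath V A).
Hypotheses (HS : monomial_admissible_subcoalgebra s t S) (Sp : S p).
Hypothesis p_nontrivial : (0 < plength p)%N.

Section Right.
Hypothesis p_right_maximal : forall b, s b = pend t p -> ~ S (path_arrow p b).

Lemma ends_with_ptake_drop_nil q i :
  S q -> ends_with t p (ptake i q) -> drop i q.2 = [::].
Proof.
move=> Sq [l [/= El Ee]]; case Ed: (drop i q.2) => [|b r] //; exfalso.
have Spb : S (p.1, p.2 ++ [:: b]).
  rewrite -Ee; apply: (monomial_subpath (l3 := r) HS).
  by rewrite !catA -El -catA /= -Ed cat_take_drop; case: (q) Sq.
have sb : s b = pend t p.
  by case: HS => valid _ _ _; case: (valid_from_cat (valid _ Spb)).
by apply: (p_right_maximal sb); rewrite /path_arrow -cats1.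
Qed.

Lemma ends_with_ptake q i : S q -> ends_with t p (ptake i q) -> ends_with t p q.
Proof.
move=> Sq Pt; move: (Pt); rewrite /ptake -[in X in X -> _](cats0 (take i q.2)).
by rewrite -(ends_with_ptake_drop_nil Sq Pt) cat_take_drop; case: (q).
Qed.

Lemma ends_with_split q i :
  S q -> ends_with t p (ptake i q) -> ends_with t p (pdrop t i q) -> False.
Proof.
move=> Sq /(ends_with_ptake_drop_nil Sq) Ed [l [/= El _]].
move: p_nontrivial; rewrite /plength.
by move/(congr1 size): El; rewrite Ed size_cat; case: (size p.2) => // n; rewrite addnS.
Qed.

Lemma not_semiprime_of_right_maximal : ~ semiprime_coalgebra t k S.
Proof.
apply: (not_semiprime_of_supported (P := ends_with t p) _ ends_with_ptake
  ends_with_split Sp); last by exists [::].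
by move=> q i _; apply: ends_with_pdrop.
Qed.

End Right.

Section Left.
Hypothesis p_left_maximal : forall b, t b = pstart p -> ~ S (arrow_path s b p).

Lemma starts_with_pdrop_take_nil q i :
  S q -> starts_with p (pdrop t i q) -> take i q.2 = [::].
Proof.
move=> Sq [/= Ee [l El]]; case/lastP Et: (take i q.2) => [|r b] //; exfalso.
rewrite Et -cats1 end_from_cat /= in Ee.
have Sbp : S (end_from t q.1 r, b :: p.2).
  apply: (monomial_subpath (l3 := l) HS).
  by rewrite /= -El -cat_rcons -Et cat_take_drop; case: (q) Sq.
apply: (p_left_maximal Ee).
by case: HS => valid _ _ _; case: (valid _ Sbp) => /= sb _; rewrite /arrow_path sb.
Qed.

Lemma starts_with_pdrop q i :
  S q -> starts_with p (pdrop t i q) -> starts_with p q.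
Proof.
move=> Sq Pd; move: (Pd); rewrite /pdrop (starts_with_pdrop_take_nil Sq Pd) /=.
by rewrite -[in X in X -> _](cat0s (drop i q.2)) -(starts_with_pdrop_take_nil Sq Pd)
  cat_take_drop; case: (q).
Qed.

Lemma starts_with_split q i :
  S q -> starts_with p (ptake i q) -> starts_with p (pdrop t i q) -> False.
Proof.
move=> Sq [_ [l /= El]] /(starts_with_pdrop_take_nil Sq).
by rewrite El; move: p_nontrivial; rewrite /plength; case: (p.2).
Qed.

Lemma not_semiprime_of_left_maximal : ~ semiprime_coalgebra t k S.
Proof.
apply: (not_semiprime_of_supported (P := starts_with p) starts_with_pdrop _
  starts_with_split Sp); last by split=> //; exists [::]; rewrite cats0.
by move=> q i _; apply: starts_with_ptake.
Qed.

End Left.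
End NonExtendablePath.

Theorem mainTheorem20 (V A : Type) (s t : A -> V) (k : fieldType)
    (S : pred (qpath V A)) :
  monomial_admissible_subcoalgebra s t S ->
  ((exists p : qpath V A, S p /\ (0 < plength p)%N /\
       ((forall b : A, s b = pend t p -> ~ S (path_arrow p b)) \/
        (forall b : A, t b = pstart p -> ~ S (arrow_path s b p)))) ->
     ~ semiprime_coalgebra t k S)
  /\
  ((exists a : A,
       (forall b : A, t b = s a -> ~ S (arrow_path s b (arrow_as_path s a))) \/
       (forall b : A, s b = t a -> ~ S (path_arrow (arrow_as_path s a) b))) ->
     ~ semiprime_coalgebra t k S).
Proof.
move=> HS; split=> [[p [Sp [p_nontrivial [right_max | left_max]]]] | [a arrow_max]].
- exact: not_semiprime_of_right_maximal right_max.
- exact: not_semiprime_of_left_maximal left_max.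
have [_ _ _ S_arrow] := HS.
case: arrow_max => [left_max | right_max].
- exact: (not_semiprime_of_left_maximal (p := arrow_as_path s a)) left_max.
- exact: (not_semiprime_of_right_maximal (p := arrow_as_path s a)) right_max.
Qed.
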